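(* Let $v\ge w\ge 3$ and let $(\mathcal{X},\mathcal{B})$ be a $2$-IPPS$(w,v)$. If there exist two distinct blocks $A,B\in\mathcal{B}$ with $|A\cap B|=w-1$, then $|\mathcal{B}|\le v-w+1$.
   Context: A $(w,v)$ set system is a pair $(\mathcal{X},\mathcal{B})$ with $|\mathcal{X}|=v$ and $\mathcal{B}$ a family of $w$-element subsets (blocks) of $\mathcal{X}$. For a $w$-subset $T\subseteq\mathcal{X}$ let $P_t(T)=\{\mathcal{P}\subseteq\mathcal{B}: |\mathcal{P}|\le t,\ T\subseteq\bigcup_{B\in\mathcal{P}}B\}$. The set system is a $t$-IPPS$(w,v)$ if for every $w$-subset $T\subseteq\mathcal{X}$, either $P_t(T)=\emptyset$ or $\bigcap_{\mathcal{P}\in P_t(T)}\mathcal{P}\neq\emptyset$. *)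

From mathcomp Require Import all_boot.
Set Implicit Arguments. Unset Strict Implicit. Unset Printing Implicit Defensive.

Definition set_system (X : finType) (w v : nat) (B : {set {set X}}) : Prop :=
  #|X| = v /\ (forall b, b \in B -> #|b| = w).

Definition Pt (X : finType) (B : {set {set X}}) (t : nat) (T : {set X})
  : {set {set {set X}}} :=
  [set P in powerset B | (#|P| <= t) && (T \subset cover P)].

Definition IPPS (X : finType) (t w v : nat) (B : {set {set X}}) : Prop :=
  set_system w v B /\
  forall T : {set X}, #|T| = w ->
    Pt B t T = set0 \/ \bigcap_(P in Pt B t T) P != set0.

From mathcomp Require Import all_boot.
From mathcomp Require Import zify.
Set Implicit Arguments.

(* Let A, C be blocks meeting in w - 1 points and U := A :|: C, so #|U| = w + 1.
   A third block D inside U would be covered both by {D} and by {A, C}, two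
   disjoint families; hence every block other than A and C has a point outside U.
   A point y outside U lies in at most one block: if y is in E and E', then the
   w-set y |: (A :&: C) is covered by {A, E}, {A, E'} and {C, E}, whose only
   possible common member forces E = E'.  Choosing an outside point in each
   other block is thus an injection into ~: U, and #|B| - 2 <= v - (w + 1). *)

Section SetSystems.

Variables (X : finType) (B : {set {set X}}).

Lemma pair_in_Pt2 (T D E : {set X}) :
  D \in B -> E \in B -> T \subset D :|: E -> [set D; E] \in Pt B 2 T.
Proof.
move=> DB EB sTDE; rewrite inE powersetE cards2 ltnS leq_b1 /=.
apply/andP; split.
  by apply/subsetP => Q; rewrite !inE => /orP[]/eqP->.
apply: (subset_trans sTDE); apply/subsetP => x.
by rewrite inE => /orP[] xP; apply/bigcupP; [exists D | exists E];
  rewrite ?inE ?eqxx ?orbT.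
Qed.

Lemma Pt_common_block t w v (T : {set X}) (P : {set {set X}}) :
  IPPS t w v B -> #|T| = w -> P \in Pt B t T ->
  exists Q, forall P', P' \in Pt B t T -> Q \in P'.
Proof.
move=> [_ traceable] cardT PT.
case: (traceable T cardT) => [Pt0 | /set0Pn[Q /bigcapP inQ]]; last by exists Q.
by rewrite Pt0 inE in PT.
Qed.

Lemma block_not_subset_pair_union w v (A C D : {set X}) :
  IPPS 2 w v B -> A \in B -> C \in B -> D \in B -> D \notin [set A; C] ->
  ~~ (D \subset A :|: C).
Proof.
move=> B_IPPS AB CB DB DAC; apply/negP => sDAC.
have [[_ cardB] _] := B_IPPS.
have AC_covers := pair_in_Pt2 AB CB sDAC.
have [Q inQ] := Pt_common_block B_IPPS (cardB D DB) AC_covers.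
have /inQ := pair_in_Pt2 DB DB (subsetUl D D).
by rewrite !inE orbb => /eqP QD; rewrite -QD inQ in DAC.
Qed.

Lemma cardsU_meet_pred w (A C : {set X}) :
  0 < w -> #|A| = w -> #|C| = w -> #|A :&: C| = w.-1 -> #|A :|: C| = w.+1.
Proof. by move=> w_gt0 cardA cardC cardAC; have := cardsUI A C; lia. Qed.

Lemma card_le_private_points (S : {set {set X}}) (U : {set X}) :
  {in S, forall D : {set X}, ~~ (D \subset U)} ->
  (forall y D E, y \notin U -> D \in S -> E \in S -> y \in D -> y \in E -> D = E) ->
  #|S| <= #|~: U|.
Proof.
move=> outside private.
pose f D := [pick y in D :\: U].
have fS : {in S, forall D, exists2 y, y \in D :\: U & f D = Some y}.
  move=> D DS; rewrite /f; case: pickP => [y yD | none]; first by exists y.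
  by have := outside D DS; rewrite -setD_eq0; case/set0Pn => y; rewrite none.
have f_inj : {in S &, injective f}.
  move=> D E DS ES fDE.
  have [y yD fD] := fS D DS; have [z zE fE] := fS E ES.
  move: fDE yD zE; rewrite fD fE => -[<-]; rewrite !inE => /andP[yU yD] /andP[_ yE].
  exact: private yU DS ES yD yE.
rewrite -(card_in_imset f_inj) -[#|~: U|](card_imset _ (@Some_inj _)).
apply: subset_leq_card; apply/subsetP => _ /imsetP[D DS ->].
have [y + ->] := fS D DS; rewrite !inE => /andP[yU _].
by apply/imsetP; exists y; rewrite ?inE.
Qed.

End SetSystems.

Section ClosePair.

Variables (X : finType) (w v : nat) (B : {set {set X}}) (A C : {set X}).
Hypotheses (B_IPPS : IPPS 2 w v B) (w_gt0 : 0 < w).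
Hypotheses (AB : A \in B) (CB : C \in B) (neqAC : A != C).
Hypothesis cardAC : #|A :&: C| = w.-1.

Let cardB : forall D, D \in B -> #|D| = w. Proof. by case: B_IPPS => -[]. Qed.

Lemma outside_point_unique_block y E E' :
  y \notin A :|: C -> E \in B -> E' \in B -> y \in E -> y \in E' -> E = E'.
Proof.
rewrite inE negb_or => /andP[yA yC] EB E'B yE yE'.
set T := y |: (A :&: C).
have cardT : #|T| = w by rewrite cardsU1 cardAC inE (negbTE yA); lia.
have coverT (D F : {set X}) : A :&: C \subset D -> y \in F -> T \subset D :|: F.
  move=> sACD yF; rewrite subUset sub1set inE yF orbT /=.
  exact: subset_trans sACD (subsetUl _ _).
have AE_covers := pair_in_Pt2 AB EB (coverT _ _ (subsetIl A C) yE).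
have [Q inQ] := Pt_common_block B_IPPS cardT AE_covers.
have QAE := inQ _ AE_covers.
have /inQ QAE' := pair_in_Pt2 AB E'B (coverT _ _ (subsetIl A C) yE').
have /inQ QCE := pair_in_Pt2 CB EB (coverT _ _ (subsetIr A C) yE).
have neqAE : A != E by apply: contraNneq yA => ->.
have QE : Q = E.
  move: QAE QCE; rewrite !inE => /orP[]/eqP-> //.
  by rewrite (negbTE neqAC) (negbTE neqAE).
by move: QAE'; rewrite QE !inE eq_sym (negbTE neqAE) => /eqP.
Qed.

Lemma card_other_blocks_le : #|B :\: [set A; C]| <= #|~: (A :|: C)|.
Proof.
apply: card_le_private_points.
  by move=> D /setDP[DB DAC]; apply: block_not_subset_pair_union B_IPPS AB CB DB DAC.
by move=> y D E yAC /setDP[DB _] /setDP[EB _]; apply: outside_point_unique_block.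
Qed.

End ClosePair.

Theorem proposition2 (X : finType) (w v : nat) (B : {set {set X}}) :
  3 <= w -> w <= v ->
  IPPS 2 w v B ->
  (exists A C, [/\ A \in B, C \in B, A != C & #|A :&: C| = w.-1]) ->
  #|B| <= v - w + 1.
Proof.
move=> w_ge3 _ B_IPPS [A [C [AB CB neqAC cardAC]]].
have w_gt0 : 0 < w by apply: leq_trans w_ge3.
have [[cardX cardB] _] := B_IPPS.
have cardU : #|A :|: C| = w.+1 :=
  cardsU_meet_pred w_gt0 (cardB A AB) (cardB C CB) cardAC.
have cardCU : w.+1 + #|~: (A :|: C)| = v by rewrite -cardU cardsC.
have cardS : #|B :\: [set A; C]| <= #|~: (A :|: C)|.
  exact: card_other_blocks_le B_IPPS w_gt0 AB CB neqAC cardAC.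
have cardBS : #|B| <= #|B :\: [set A; C]| + 2.
  rewrite -(cardsID [set A; C] B) addnC leq_add2l.
  by rewrite (leq_trans (subset_leq_card (subsetIr _ _))) // cards2; case: (A != C).
lia.
Qed.
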